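(* For every graph $U$ containing no $K_{\aleph_0}$ subgraph, there is a graph $\widehat{U}\in\mathcal{D}(U)$ that contains every graph in $\mathcal{D}(U)$.
   Context: All graphs are simple and countable; $G$ contains $H$ if $H$ is isomorphic to a subgraph of $G$. A tree-decomposition of $G$ is a family $(B_x:x\in V(T))$ of subsets of $V(G)$ indexed by a tree $T$ with every edge of $G$ inside some bag and, for each vertex $v$, $\{x:v\in B_x\}$ inducing a nonempty subtree of $T$. The torso of a node $x$ is the graph obtained from $G[B_x]$ by adding an edge $vw$ whenever $v,w\in B_x\cap B_y$ for some edge $xy\in E(T)$. $\mathcal{D}(U)$ is the class of graphs having a tree-decomposition in which every torso is isomorphic to a subgraph of $U$. *)

From Stdlib Require Import List.
Import ListNotations.

Record graph := Graph {
  vert : Type;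
  adj : vert -> vert -> Prop;
  adj_sym : forall x y, adj x y -> adj y x;
  adj_irrefl : forall x, ~ adj x x;
  vert_countable : exists f : vert -> nat, forall x y, f x = f y -> x = y
}.

(** G contains H: H is isomorphic to a (not necessarily induced) subgraph of G,
    i.e. there is an injective adjacency-preserving map H -> G. *)
Definition contains (G H : graph) : Prop :=
  exists f : vert H -> vert G,
    (forall x y, f x = f y -> x = y) /\
    (forall x y, adj H x y -> adj G (f x) (f y)).

Definition contains_Kaleph0 (G : graph) : Prop :=
  exists f : nat -> vert G,
    (forall i j, f i = f j -> i = j) /\
    (forall i j, i <> j -> adj G (f i) (f j)).

(** Walks in an abstract relation [E], all of whose vertices lie in [S]:
    [walk_in E S x l y] means x = l_0, l_0 ... l_n = y consecutive E-adjacent,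
    the list [x :: l] listing the vertices. *)
Fixpoint walk_in {X : Type} (E : X -> X -> Prop) (S : X -> Prop)
    (x : X) (l : list X) (y : X) : Prop :=
  match l with
  | [] => S x /\ x = y
  | z :: l' => S x /\ E x z /\ walk_in E S z l' y
  end.

Definition has_cycle {X : Type} (E : X -> X -> Prop) : Prop :=
  exists (x : X) (l : list X) (y : X),
    NoDup (x :: l) /\ 2 <= length l /\ walk_in E (fun _ => True) x l y /\ E y x.

Record tree := Tree {
  tnode : Type;
  tadj : tnode -> tnode -> Prop;
  tadj_sym : forall x y, tadj x y -> tadj y x;
  tadj_irrefl : forall x, ~ tadj x x;
  tconnected : forall x y, exists l, walk_in tadj (fun _ => True) x l y;
  tacyclic : ~ has_cycle tadj
}.

Definition is_tree_decomposition (G : graph) (T : tree)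
    (B : tnode T -> vert G -> Prop) : Prop :=
  (forall v w, adj G v w -> exists x, B x v /\ B x w) /\
  (forall v, (exists x, B x v) /\
     forall x y, B x v -> B y v ->
       exists l, walk_in (tadj T) (fun z => B z v) x l y).

Definition torso_adj (G : graph) (T : tree) (B : tnode T -> vert G -> Prop)
    (x : tnode T) (v w : vert G) : Prop :=
  B x v /\ B x w /\ v <> w /\
  (adj G v w \/ exists y, tadj T x y /\ B y v /\ B y w).

Definition torso_in (U G : graph) (T : tree) (B : tnode T -> vert G -> Prop)
    (x : tnode T) : Prop :=
  exists f : vert G -> vert U,
    (forall v w, B x v -> B x w -> f v = f w -> v = w) /\
    (forall v w, torso_adj G T B x v w -> adj U (f v) (f w)).

Definition inD (U G : graph) : Prop :=
  exists (T : tree) (B : tnode T -> vert G -> Prop),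
    is_tree_decomposition G T B /\ forall x, torso_in U G T B x.

(** [Uhat] is a tree of copies of [U]: its tree is the tree of finite lists of
    labels, and the copy at a child is glued to the copy at its parent along a
    finite partial isomorphism between cliques of [U] (the gluing of the label);
    each gluing is used by countably many children.  The bags of this
    decomposition are the copies, and each torso maps into [U] because the
    shared vertices of adjacent bags form glued cliques.

    Conversely, given [G] with a decomposition (T, B) whose torsos embed in
    [U], root [T].  The adhesion set of a node with its parent is a clique of
    both torsos, hence finite since [U] has no K_aleph0; mapped into [U] by the
    two torso embeddings it is a gluing.  Mapping each node to the list of
    labels on its path to the root and each vertex to its image in the copy at
    the top of its subtree embeds [G] into [Uhat]. *)

From Stdlib Require Import List Lia Arith Classical ClassicalEpsilon ProofIrrelevance Cantor.
Import ListNotations.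

Lemma walk_app {X} (E : X -> X -> Prop) S x l1 y l2 z :
  walk_in E S x l1 y -> walk_in E S y l2 z -> walk_in E S x (l1 ++ l2) z.
Proof.
  revert x; induction l1 as [|a l1 IH]; simpl; intros x H1 H2.
  - destruct H1 as [_ ->]; exact H2.
  - destruct H1 as [Hs [He Hw]]; auto.
Qed.

Lemma walk_split {X} (E : X -> X -> Prop) S l1 : forall a l2 b,
  walk_in E S a (l1 ++ l2) b -> exists c, walk_in E S a l1 c /\ walk_in E S c l2 b.
Proof.
  induction l1 as [|z l1 IH]; intros a l2 b H; simpl in *.
  - exists a; split; [|exact H]. split; [|reflexivity]. destruct l2; simpl in H; tauto.
  - destruct H as [Hs [He Hw]]. destruct (IH _ _ _ Hw) as [c [W1 W2]]. eauto.
Qed.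

Lemma walk_fun {X} (E : X -> X -> Prop) Q n : forall g : nat -> X,
  (forall k, k < n -> E (g k) (g (S k))) -> (forall k, k <= n -> Q (g k)) ->
  walk_in E Q (g 0) (map g (seq 1 n)) (g n).
Proof.
  induction n as [|n IH]; intros g HE HS; simpl.
  - split; [apply HS; lia|reflexivity].
  - split; [apply HS; lia|]. split; [apply HE; lia|].
    rewrite <- seq_shift, map_map.
    apply (IH (fun k => g (S k))); intros; [apply HE|apply HS]; lia.
Qed.

Lemma walk_nth {X} (E : X -> X -> Prop) Q l : forall x y, walk_in E Q x l y ->
  (forall k, k < length l -> E (nth k (x :: l) x) (nth (S k) (x :: l) x)) /\
  (forall k, k <= length l -> Q (nth k (x :: l) x)) /\ nth (length l) (x :: l) x = y.
Proof.
  induction l as [|a l IH]; intros x y H.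
  - destruct H as [Hs ->]. repeat split; [intros; simpl in *; lia|].
    intros [|k] Hk; [exact Hs|simpl in Hk; lia].
  - destruct H as [Hs [He Hw]]. destruct (IH _ _ Hw) as [H1 [H2 H3]].
    assert (Hsh : forall k, k <= length l -> nth (S k) (x :: a :: l) x = nth k (a :: l) a).
    { intros k Hk. change (nth (S k) (x :: a :: l) x) with (nth k (a :: l) x).
      apply nth_indep. simpl; lia. }
    simpl length. repeat split.
    + intros [|k] Hk.
      * rewrite (Hsh 0) by lia. exact He.
      * rewrite (Hsh k), (Hsh (S k)) by lia. apply H1; lia.
    + intros [|k] Hk; [exact Hs|]. rewrite Hsh by lia. apply H2; lia.
    + rewrite Hsh by lia. exact H3.
Qed.

Lemma cycle_of_path {X} (E : X -> X -> Prop) (g : nat -> X) n :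
  2 <= n -> (forall k, k < n -> E (g k) (g (S k))) -> E (g n) (g 0) ->
  (forall a b, a <= n -> b <= n -> g a = g b -> a = b) -> has_cycle E.
Proof.
  intros Hn HE Hclose Hinj. exists (g 0), (map g (seq 1 n)), (g n). repeat split.
  - change (g 0 :: map g (seq 1 n)) with (map g (seq 0 (S n))).
    apply NoDup_map_NoDup_ForallPairs; [|apply seq_NoDup].
    intros a b Ha Hb. apply in_seq in Ha, Hb. apply Hinj; lia.
  - rewrite length_map, length_seq. exact Hn.
  - apply walk_fun; auto.
  - exact Hclose.
Qed.

Lemma least_nat (P : nat -> Prop) : (exists n, P n) -> exists n, P n /\ forall m, P m -> n <= m.
Proof.
  intros [n Hn]. induction n as [n IH] using lt_wf_ind.
  destruct (classic (exists m, m < n /\ P m)) as [[m [Hm Pm]]|Hno].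
  - exact (IH m Hm Pm).
  - exists n. split; auto. intros m Pm. destruct (le_lt_dec n m); auto. exfalso; eauto.
Qed.

Lemma exit_index (P : nat -> Prop) n : P 0 -> ~ P n -> exists k, k < n /\ P k /\ ~ P (S k).
Proof.
  induction n as [|n IH]; intros H0 Hn; [contradiction|].
  destruct (classic (P n)) as [Hp|Hp]; [exists n; auto|].
  destruct (IH H0 Hp) as [k ?]; exists k; intuition lia.
Qed.

Lemma max_index (h : nat -> nat) n : exists i, i <= n /\ forall k, k <= n -> h k <= h i.
Proof.
  induction n as [|n [i [Hi Hm]]].
  - exists 0; split; [lia|]; intros k Hk; replace k with 0 by lia; lia.
  - destruct (le_lt_dec (h (S n)) (h i)).
    + exists i; split; [lia|]; intros k Hk.
      destruct (Nat.eq_dec k (S n)); [subst; lia|apply Hm; lia].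
    + exists (S n); split; [lia|]; intros k Hk.
      destruct (Nat.eq_dec k (S n)); [subst; lia|specialize (Hm k ltac:(lia)); lia].
Qed.

Definition countable (X : Type) : Prop := exists f : X -> nat, forall x y, f x = f y -> x = y.

Lemma countable_nat : countable nat.
Proof. exists (fun n => n); auto. Qed.

Lemma countable_prod X Y : countable X -> countable Y -> countable (X * Y).
Proof.
  intros [f Hf] [g Hg]. exists (fun p => Cantor.to_nat (f (fst p), g (snd p))).
  intros [a b] [c d] H. apply (f_equal Cantor.of_nat) in H.
  rewrite !cancel_of_to in H. injection H as Ha Hb. f_equal; auto.
Qed.

Fixpoint code_list (l : list nat) : nat :=
  match l with [] => 0 | a :: l => S (Cantor.to_nat (a, code_list l)) end.

Lemma code_list_inj l1 : forall l2, code_list l1 = code_list l2 -> l1 = l2.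
Proof.
  induction l1 as [|a l1 IH]; intros [|b l2]; cbn [code_list]; intros H;
    try discriminate; auto.
  apply eq_add_S, (f_equal Cantor.of_nat) in H. rewrite !cancel_of_to in H.
  injection H as -> H. f_equal; auto.
Qed.

Lemma countable_list X : countable X -> countable (list X).
Proof.
  intros [f Hf]. exists (fun l => code_list (map f l)). intros l1 l2 H.
  apply code_list_inj in H. revert l2 H.
  induction l1 as [|a l1 IH]; intros [|b l2] H; simpl in *; try discriminate; auto.
  injection H as Hab Hl. f_equal; auto.
Qed.

Lemma countable_sig X (P : X -> Prop) : countable X -> countable {x | P x}.
Proof.
  intros [f Hf]. exists (fun x => f (proj1_sig x)). intros [a pa] [b pb] H. simpl in H.
  apply Hf in H. subst. f_equal. apply proof_irrelevance.
Qed.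

Lemma finite_listing X (P : X -> Prop) :
  (exists l, forall a, P a -> In a l) -> exists l, forall a, In a l <-> P a.
Proof.
  intros [l Hl].
  exists (filter (fun a => if excluded_middle_informative (P a) then true else false) l).
  intros a. rewrite filter_In.
  destruct (excluded_middle_informative (P a)) as [Ha|Ha]; split; intros H.
  - exact Ha.
  - split; [apply Hl, H|reflexivity].
  - destruct H as [_ H]; discriminate.
  - contradiction.
Qed.

Lemma infinite_sequence X (P : X -> Prop) :
  ~ (exists l, forall a, P a -> In a l) ->
  exists e : nat -> X, (forall n, P (e n)) /\ forall m n, e m = e n -> m = n.
Proof.
  intros Hinf.
  assert (Hnew : forall l, exists a, P a /\ ~ In a l).
  { intros l. apply NNPP; intros Hn. apply Hinf. exists l. intros a Ha.
    apply NNPP; intros Hi. apply Hn; eauto. }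
  set (pick := fun l => proj1_sig (constructive_indefinite_description _ (Hnew l))).
  assert (Hpick : forall l, P (pick l) /\ ~ In (pick l) l).
  { intros l. unfold pick. destruct (constructive_indefinite_description _ _); auto. }
  (* [prefix n] lists the first [n] chosen elements; each new one avoids them. *)
  set (prefix := fix prefix n := match n with 0 => [] | S n => pick (prefix n) :: prefix n end).
  assert (Hprefix : forall m n, m < n -> In (pick (prefix m)) (prefix n)).
  { intros m n; induction n; intros H; [lia|]. simpl.
    destruct (Nat.eq_dec m n); [subst; left; reflexivity|right; apply IHn; lia]. }
  exists (fun n => pick (prefix n)). split; [intros n; apply Hpick|].
  intros m n H. destruct (lt_eq_lt_dec m n) as [[Hl|Hl]|Hl]; auto; exfalso.
  - apply (proj2 (Hpick (prefix n))). rewrite <- H. apply Hprefix; auto.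
  - apply (proj2 (Hpick (prefix m))). rewrite H. apply Hprefix; auto.
Qed.

(* In a graph without a K_aleph0 subgraph, every clique is finite: a subset [P]
   mapped injectively onto a clique of [U] is the set of elements of a list. *)
Lemma clique_finite (U : graph) X (P : X -> Prop) (h : X -> vert U) :
  ~ contains_Kaleph0 U ->
  (forall a b, P a -> P b -> h a = h b -> a = b) ->
  (forall a b, P a -> P b -> a <> b -> adj U (h a) (h b)) ->
  exists l, forall a, In a l <-> P a.
Proof.
  intros HU Hinj Hcl. apply finite_listing, NNPP. intros Hinf.
  destruct (infinite_sequence X P Hinf) as [e [HeP He]].
  apply HU. exists (fun n => h (e n)). split.
  - intros i j H. apply He, Hinj; auto.
  - intros i j Hij. apply Hcl; auto.
Qed.

(** A node of the tree is a finite list of labels [st_n :: ... :: st_1], the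
    path from the root [] (newest label first); the node [st :: s] is a child
    of [s].  Every node carries a copy of [U]; the label [st] of a child
    carries a gluing, a finite partial isomorphism between cliques of [U],
    saying which vertices of the child copy are identified with which vertices
    of the parent copy, plus a copy index in [nat] so that every gluing is
    used by infinitely many children.  A vertex of [Uhat] is represented by
    the copy in which it appears closest to the root. *)

Section UniversalGraph.
Variable U : graph.

(* A gluing: pairs (parent vertex, child vertex) forming a bijection between
   two cliques of [U]. *)
Definition is_gluing (gl : list (vert U * vert U)) : Prop :=
 (forall p q, In p gl -> In q gl -> (fst p = fst q <-> snd p = snd q)) /\
 (forall p q, In p gl -> In q gl -> fst p <> fst q -> adj U (fst p) (fst q)) /\
 (forall p q, In p gl -> In q gl -> snd p <> snd q -> adj U (snd p) (snd q)).

Definition label := { g : list (vert U * vert U) * nat | is_gluing (fst g) }.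
Definition glue (st : label) := fst (proj1_sig st).
Lemma glue_gluing st : is_gluing (glue st).
Proof. exact (proj2_sig st). Qed.

Definition dec_eq (a b : vert U) : bool :=
  if excluded_middle_informative (a = b) then true else false.
Lemma dec_eq_spec a b : dec_eq a b = true <-> a = b.
Proof. unfold dec_eq; destruct (excluded_middle_informative (a = b)); split; congruence. Qed.

Definition lookup (gl : list (vert U * vert U)) (u : vert U) : option (vert U) :=
  match find (fun p => dec_eq (snd p) u) gl with Some p => Some (fst p) | None => None end.

Lemma lookup_some gl u k : lookup gl u = Some k -> In (k, u) gl.
Proof.
  unfold lookup. destruct (find _ gl) as [[a b]|] eqn:Hfind; [|discriminate].
  intros H; injection H as <-. apply find_some in Hfind. destruct Hfind as [Hi He].
  apply dec_eq_spec in He. simpl in He. subst; auto.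
Qed.

Lemma lookup_none gl u k : lookup gl u = None -> ~ In (k, u) gl.
Proof.
  unfold lookup. destruct (find _ gl) eqn:Hfind; [discriminate|]. intros _ Hi.
  pose proof (find_none _ _ Hfind _ Hi) as H. simpl in H.
  assert (dec_eq u u = true) by (apply dec_eq_spec; reflexivity). congruence.
Qed.

Lemma lookup_in gl u k : is_gluing gl -> In (k, u) gl -> lookup gl u = Some k.
Proof.
  intros Hg Hi. destruct (lookup gl u) as [k'|] eqn:L.
  - apply lookup_some in L. f_equal. apply (proj1 Hg _ _ L Hi). reflexivity.
  - exfalso; exact (lookup_none _ _ _ L Hi).
Qed.

(* Follow the gluings of the vertex [u] of the copy at [s] towards the root:
   the result is the copy where it first appears, and its name there. *)
Fixpoint resolve (s : list label) (u : vert U) : list label * vert U :=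
  match s with
  | [] => ([], u)
  | st :: s' =>
      match lookup (glue st) u with
      | Some k => resolve s' k
      | None => (st :: s', u)
      end
  end.

Lemma resolve_suffix s : forall u, exists p, s = p ++ fst (resolve s u).
Proof.
  induction s as [|st s IH]; intros u; simpl; [exists []; reflexivity|].
  destruct (lookup (glue st) u) as [k|]; [|exists []; reflexivity].
  destruct (IH k) as [p Hp]. exists (st :: p). simpl; congruence.
Qed.

Lemma resolve_idem s : forall u, resolve (fst (resolve s u)) (snd (resolve s u)) = resolve s u.
Proof.
  induction s as [|st s IH]; intros u; simpl; [reflexivity|].
  destruct (lookup (glue st) u) as [k|] eqn:L; [apply IH|]. simpl. rewrite L. reflexivity.
Qed.

Lemma resolve_not_down st s k u : resolve s k <> (st :: s, u).
Proof.
  intros H. destruct (resolve_suffix s k) as [p Hp]. rewrite H in Hp.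
  apply (f_equal (@length _)) in Hp. rewrite length_app in Hp. simpl in Hp. lia.
Qed.

Lemma resolve_inj s : forall u1 u2, resolve s u1 = resolve s u2 -> u1 = u2.
Proof.
  induction s as [|st s IH]; intros u1 u2; simpl; [congruence|].
  destruct (lookup (glue st) u1) as [k1|] eqn:L1, (lookup (glue st) u2) as [k2|] eqn:L2.
  - intros H. apply IH in H. subst. apply lookup_some in L1, L2.
    apply (proj1 (glue_gluing st) _ _ L1 L2). reflexivity.
  - intros H. exfalso. exact (resolve_not_down _ _ _ _ H).
  - intros H. exfalso. exact (resolve_not_down _ _ _ _ (eq_sym H)).
  - congruence.
Qed.

Definition uvert := { p : list label * vert U | resolve (fst p) (snd p) = p }.

Definition vtx s u : uvert := exist _ (resolve s u) (resolve_idem s u).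

Lemma uvert_eq (v w : uvert) : proj1_sig v = proj1_sig w -> v = w.
Proof. destruct v, w; simpl; intros; subst; f_equal; apply proof_irrelevance. Qed.

Lemma vtx_inj s u1 u2 : vtx s u1 = vtx s u2 -> u1 = u2.
Proof. intros H. apply (f_equal (@proj1_sig _ _)) in H. exact (resolve_inj s _ _ H). Qed.

Definition uadj (v w : uvert) : Prop :=
  exists s a b, vtx s a = v /\ vtx s b = w /\ adj U a b.

Lemma uadj_sym v w : uadj v w -> uadj w v.
Proof. intros (s & a & b & H1 & H2 & H3). exists s, b, a. auto using adj_sym. Qed.

Lemma uadj_irrefl v : ~ uadj v v.
Proof.
  intros (s & a & b & H1 & H2 & H3). rewrite <- H2 in H1. apply vtx_inj in H1. subst.
  exact (adj_irrefl _ _ H3).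
Qed.

Lemma uvert_countable : countable uvert.
Proof.
  apply countable_sig. apply countable_prod; [|exact (vert_countable U)].
  apply countable_list. apply countable_sig. apply countable_prod; [|apply countable_nat].
  apply countable_list. apply countable_prod; exact (vert_countable U).
Qed.

Definition Uhat : graph := Graph uvert uadj uadj_sym uadj_irrefl uvert_countable.

Definition ladj (s t : list label) : Prop := (exists st, t = st :: s) \/ (exists st, s = st :: t).

Lemma ladj_sym s t : ladj s t -> ladj t s.
Proof. unfold ladj; tauto. Qed.

Lemma ladj_irrefl s : ~ ladj s s.
Proof. intros [[st H]|[st H]]; apply (f_equal (@length _)) in H; simpl in H; lia. Qed.

Lemma ladj_down a b : ladj a b -> length b <= length a -> exists st, a = st :: b.
Proof. intros [[st H]|[st H]] Hl; [subst; simpl in Hl; lia|eauto]. Qed.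

Lemma skipn_cons_nth {X} (s : list X) k d :
  k < length s -> skipn k s = nth k s d :: skipn (S k) s.
Proof.
  revert k; induction s as [|a s IH]; intros k Hk; simpl in Hk; [lia|].
  destruct k; [reflexivity|]. apply IH. lia.
Qed.

Lemma up_walk (P : list label -> Prop) s n : n <= length s ->
  (forall k, k <= n -> P (skipn k s)) -> exists l, walk_in ladj P s l (skipn n s).
Proof.
  intros Hn HP. exists (map (fun k => skipn k s) (seq 1 n)).
  apply (walk_fun ladj P n (fun k => skipn k s)); auto.
  intros k Hk. right. destruct s as [|a s']; [simpl in Hn; lia|].
  exists (nth k (a :: s') a). exact (skipn_cons_nth (a :: s') k a ltac:(lia)).
Qed.

Lemma walk_rev_sym {X} (E : X -> X -> Prop) Q x l y :
  (forall a b, E a b -> E b a) -> walk_in E Q x l y -> exists l', walk_in E Q y l' x.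
Proof.
  intros Hsym Hw. destruct (walk_nth _ _ _ _ _ Hw) as [HE [HQ Hy]].
  exists (map (fun k => nth (length l - k) (x :: l) x) (seq 1 (length l))).
  pose proof (walk_fun E Q (length l) (fun k => nth (length l - k) (x :: l) x)) as W.
  cbv beta in W. rewrite Nat.sub_0_r, Nat.sub_diag, Hy in W. apply W.
  - intros k Hk. apply Hsym. replace (length l - k) with (S (length l - S k)) by lia.
    apply HE. lia.
  - intros k Hk. apply HQ. lia.
Qed.

Lemma ltree_connected s t : exists l, walk_in ladj (fun _ => True) s l t.
Proof.
  destruct (up_walk (fun _ => True) s (length s)) as [l1 W1]; auto.
  destruct (up_walk (fun _ => True) t (length t)) as [l2 W2]; auto.
  rewrite skipn_all in W1, W2. destruct (walk_rev_sym _ _ _ _ _ ladj_sym W2) as [l2' W2'].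
  exists (l1 ++ l2'). eapply walk_app; eauto.
Qed.

(* A cycle has a vertex of maximal length; its two neighbours on the cycle are
   then both its parent, a contradiction. *)
Lemma ltree_acyclic : ~ has_cycle ladj.
Proof.
  intros (x & l & y & Hnd & Hlen & Hw & Hclose).
  destruct (walk_nth _ _ _ _ _ Hw) as [HE [_ Hy]].
  set (n := length l) in *. set (g := fun k => nth k (x :: l) x) in *.
  assert (Hcyc : ladj (g n) (g 0)) by (unfold g; rewrite Hy; exact Hclose).
  destruct (max_index (fun k => length (g k)) n) as [i [Hi Hm]].
  set (p := if Nat.eq_dec i 0 then n else i - 1).
  set (q := if Nat.eq_dec i n then 0 else S i).
  assert (Hp : ladj (g i) (g p) /\ p <= n).
  { unfold p; destruct (Nat.eq_dec i 0); [subst; split; [apply ladj_sym, Hcyc|lia]|].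
    split; [|lia]. apply ladj_sym. assert (HE' := HE (i - 1) ltac:(lia)).
    replace (S (i - 1)) with i in HE' by lia. exact HE'. }
  assert (Hq : ladj (g i) (g q) /\ q <= n).
  { unfold q; destruct (Nat.eq_dec i n); [subst; split; [exact Hcyc|lia]|].
    split; [apply HE|]; lia. }
  destruct (ladj_down _ _ (proj1 Hp) (Hm _ (proj2 Hp))) as [st1 E1].
  destruct (ladj_down _ _ (proj1 Hq) (Hm _ (proj2 Hq))) as [st2 E2].
  rewrite E1 in E2. injection E2 as _ E2.
  assert (p = q) by (apply (proj1 (NoDup_nth (x :: l) x) Hnd); simpl; try lia; exact E2).
  unfold p, q in *. destruct (Nat.eq_dec i 0), (Nat.eq_dec i n); lia.
Qed.

Definition label_tree : tree :=
  Tree (list label) ladj ladj_sym ladj_irrefl ltree_connected ltree_acyclic.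

Definition bag (s : list label) (v : uvert) : Prop := exists u, vtx s u = v.

(* The node where the vertex [v] is represented, the top of its subtree. *)
Definition home (v : uvert) := fst (proj1_sig v).

Lemma bag_home v : bag (home v) v.
Proof. exists (snd (proj1_sig v)). apply uvert_eq. exact (proj2_sig v). Qed.

Lemma bag_suffix s v : bag s v -> exists p, s = p ++ home v.
Proof. intros [u <-]. apply resolve_suffix. Qed.

Lemma home_len s v : bag s v -> length (home v) <= length s.
Proof. intros H. destruct (bag_suffix _ _ H) as [p ->]. rewrite length_app. lia. Qed.

Lemma bag_up st s v : bag (st :: s) v -> home v <> st :: s -> bag s v.
Proof.
  intros [u Hu] Hh. destruct (lookup (glue st) u) as [k|] eqn:L.
  - exists k. apply uvert_eq. rewrite <- Hu. simpl. rewrite L. reflexivity.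
  - exfalso. apply Hh. rewrite <- Hu. unfold home. simpl. rewrite L. reflexivity.
Qed.

Lemma bag_mid p : forall s v, bag (p ++ s) v -> (exists q, s = q ++ home v) -> bag s v.
Proof.
  induction p as [|a p IH]; intros s v H Hq; [exact H|].
  apply IH; auto. apply (bag_up a); [exact H|]. intros E. destruct Hq as [q Hq].
  apply (f_equal (@length _)) in E. rewrite Hq in E. simpl in E. rewrite !length_app in E. lia.
Qed.

Lemma walk_to_home s v : bag s v -> exists l, walk_in ladj (fun z => bag z v) s l (home v).
Proof.
  intros Hs. destruct (bag_suffix _ _ Hs) as [p Hp].
  assert (Hsk : skipn (length p) s = home v)
    by (rewrite Hp, skipn_app, skipn_all, Nat.sub_diag; reflexivity).
  rewrite <- Hsk. apply up_walk; [rewrite Hp, length_app; lia|].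
  intros k Hk. apply (bag_mid (firstn k s)); [rewrite firstn_skipn; exact Hs|].
  exists (skipn k p). rewrite Hp, skipn_app. replace (k - length p) with 0 by lia. reflexivity.
Qed.

Lemma Uhat_decomposition : is_tree_decomposition Uhat label_tree bag.
Proof.
  split.
  - intros v w (s & a & b & H1 & H2 & _). exists s. split; [exists a|exists b]; auto.
  - intros v. split; [exists (home v); apply bag_home|].
    intros x y Hx Hy. destruct (walk_to_home _ _ Hx) as [l1 W1].
    destruct (walk_to_home _ _ Hy) as [l2 W2].
    destruct (walk_rev_sym _ _ _ _ _ ladj_sym W2) as [l2' W2'].
    exists (l1 ++ l2'). eapply walk_app; eauto.
Qed.

Definition coord (s : list label) (v : uvert) : vert U :=
  match excluded_middle_informative (exists u, vtx s u = v) with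
  | left H => proj1_sig (constructive_indefinite_description _ H)
  | right _ => snd (proj1_sig v)
  end.

Lemma coord_spec s v : bag s v -> vtx s (coord s v) = v.
Proof.
  intros H. unfold coord. destruct (excluded_middle_informative _) as [H'|H']; [|contradiction].
  destruct (constructive_indefinite_description _ _); auto.
Qed.

Lemma glued_child st s v : bag (st :: s) v -> bag s v ->
  exists a k, In (k, a) (glue st) /\ vtx s k = v.
Proof.
  intros [a Ha] Hs. exists a. destruct (lookup (glue st) a) as [k|] eqn:L.
  - exists k. split; [apply lookup_some; auto|]. apply uvert_eq. rewrite <- Ha. simpl.
    rewrite L. reflexivity.
  - exfalso. pose proof (home_len _ _ Hs) as H. rewrite <- Ha in H. unfold home in H.
    simpl in H. rewrite L in H. simpl in H. lia.
Qed.

Lemma glued_parent st t u v : vtx (st :: t) u = v -> bag t v -> exists k, In (k, u) (glue st).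
Proof.
  intros Hu Ht. destruct (lookup (glue st) u) as [k|] eqn:L; [exists k; apply lookup_some; auto|].
  exfalso. pose proof (home_len _ _ Ht) as H. rewrite <- Hu in H. unfold home in H.
  simpl in H. rewrite L in H. simpl in H. lia.
Qed.

(* Two vertices shared by adjacent bags have adjacent coordinates, since a
   gluing identifies cliques. *)
Lemma shared_adj s t v w : bag s v -> bag s w -> v <> w -> ladj s t -> bag t v -> bag t w ->
  adj U (coord s v) (coord s w).
Proof.
  intros Hv Hw Hne Ht Htv Htw.
  pose proof (coord_spec _ _ Hv) as E1. pose proof (coord_spec _ _ Hw) as E2.
  assert (Hn : coord s v <> coord s w)
    by (intros E; apply Hne; rewrite <- E1, <- E2, E; reflexivity).
  destruct Ht as [[st ->]|[st ->]].
  - destruct (glued_child _ _ _ Htv Hv) as (a & k & Hi & Hk).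
    destruct (glued_child _ _ _ Htw Hw) as (b & k' & Hi' & Hk').
    rewrite <- E1 in Hk. apply vtx_inj in Hk. rewrite <- E2 in Hk'. apply vtx_inj in Hk'. subst.
    exact (proj1 (proj2 (glue_gluing st)) _ _ Hi Hi' Hn).
  - destruct (glued_parent _ _ _ _ E1 Htv) as [k Hi].
    destruct (glued_parent _ _ _ _ E2 Htw) as [k' Hi'].
    exact (proj2 (proj2 (glue_gluing st)) _ _ Hi Hi' Hn).
Qed.

Lemma shared_neighbour s s0 v w : s <> s0 -> bag s v -> bag s0 v -> bag s w -> bag s0 w ->
  exists t, ladj s t /\ bag t v /\ bag t w.
Proof.
  intros Hne Hsv Hs0v Hsw Hs0w.
  destruct (classic (exists p, s0 = p ++ s)) as [[p Hp]|Hno].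
  - (* [s0] lies below [s]: go one step down towards it *)
    destruct p as [|b p0]; [subst; contradiction|].
    destruct (exists_last (l := b :: p0) ltac:(discriminate)) as (p' & a & Ha).
    rewrite Ha, <- app_assoc in Hp. simpl in Hp.
    exists (a :: s). split; [left; eauto|].
    split; apply (bag_mid p'); try (rewrite <- Hp; auto).
    + destruct (bag_suffix _ _ Hsv) as [q ->]. exists (a :: q). reflexivity.
    + destruct (bag_suffix _ _ Hsw) as [q ->]. exists (a :: q). reflexivity.
  - (* otherwise go one step up *)
    destruct s as [|st t]; [exfalso; apply Hno; exists s0; rewrite app_nil_r; reflexivity|].
    exists t. split; [right; eauto|].
    split; apply (bag_up st); auto; intros E; apply Hno.
    + destruct (bag_suffix _ _ Hs0v) as [q Hq]. exists q. rewrite <- E. exact Hq.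
    + destruct (bag_suffix _ _ Hs0w) as [q Hq]. exists q. rewrite <- E. exact Hq.
Qed.

Lemma Uhat_torso s : torso_in U Uhat label_tree bag s.
Proof.
  exists (coord s). split.
  - intros v w Hv Hw E. rewrite <- (coord_spec _ _ Hv), <- (coord_spec _ _ Hw), E. reflexivity.
  - intros v w (Hv & Hw & Hne & [(s0 & a & b & Ha & Hb & Hab)|(t & Ht & Htv & Htw)]).
    + destruct (classic (s = s0)) as [<-|Hs].
      * rewrite <- (coord_spec _ _ Hv) in Ha. rewrite <- (coord_spec _ _ Hw) in Hb.
        apply vtx_inj in Ha, Hb. rewrite <- Ha, <- Hb. exact Hab.
      * destruct (shared_neighbour s s0 v w Hs Hv (ex_intro _ a Ha) Hw (ex_intro _ b Hb))
          as (t & Ht & Htv & Htw).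
        eapply shared_adj; eauto.
    + eapply shared_adj; eauto.
Qed.

Lemma Uhat_inD : inD U Uhat.
Proof. exists label_tree, bag. split; [exact Uhat_decomposition|exact Uhat_torso]. Qed.

End UniversalGraph.

Section RootedTree.
Variable T : tree.
Variable r : tnode T.
Notation E := (tadj T).

Definition walk_length x n := exists l, length l = n /\ walk_in E (fun _ => True) r l x.

Lemma depth_exists x : exists n, walk_length x n /\ forall m, walk_length x m -> n <= m.
Proof.
  apply least_nat. destruct (tconnected T r x) as [l Hl]. exists (length l), l. auto.
Qed.

Definition depth x := proj1_sig (constructive_indefinite_description _ (depth_exists x)).

Lemma depth_spec x : walk_length x (depth x) /\ forall m, walk_length x m -> depth x <= m.
Proof. unfold depth. destruct (constructive_indefinite_description _ _); auto. Qed.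

Lemma depth_root : depth r = 0.
Proof.
  assert (H : walk_length r 0) by (exists []; simpl; auto).
  pose proof (proj2 (depth_spec r) 0 H). lia.
Qed.

Lemma depth_zero x : depth x = 0 -> x = r.
Proof.
  intros H. destruct (proj1 (depth_spec x)) as [l [Hl Hw]]. rewrite H in Hl.
  destruct l; [|discriminate]. simpl in Hw. symmetry; tauto.
Qed.

Lemma depth_adj x y : E x y -> depth y <= S (depth x).
Proof.
  intros Hxy. destruct (proj1 (depth_spec x)) as [l [Hl Hw]]. apply (proj2 (depth_spec y)).
  exists (l ++ [y]). split; [rewrite length_app; simpl; lia|].
  eapply walk_app; eauto. simpl. tauto.
Qed.

Lemma depth_pred x : x <> r -> exists y, E x y /\ S (depth y) = depth x.
Proof.
  intros Hx. destruct (proj1 (depth_spec x)) as [l [Hl Hw]].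
  destruct l as [|a l0]; [simpl in Hw; exfalso; apply Hx; symmetry; tauto|].
  destruct (exists_last (l := a :: l0) ltac:(discriminate)) as (l' & z & Hz).
  rewrite Hz in Hw, Hl. destruct (walk_split _ _ _ _ _ _ Hw) as (c & W1 & W2).
  destruct W2 as (_ & Hcz & _ & Hzx). subst z.
  exists c. split; [apply tadj_sym; auto|].
  pose proof (proj2 (depth_spec c) (length l') ltac:(exists l'; auto)).
  pose proof (depth_adj _ _ Hcz). rewrite length_app in Hl. simpl in Hl. lia.
Qed.

Definition par x : tnode T :=
  match excluded_middle_informative (x = r) with
  | left _ => r
  | right H => proj1_sig (constructive_indefinite_description _ (depth_pred x H))
  end.

Lemma par_spec x : x <> r -> E x (par x) /\ S (depth (par x)) = depth x.
Proof.
  intros H. unfold par. destruct (excluded_middle_informative (x = r)); [contradiction|].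
  destruct (constructive_indefinite_description _ _); auto.
Qed.

Lemma par_root : par r = r.
Proof. unfold par. destruct (excluded_middle_informative (r = r)); congruence. Qed.

Fixpoint anc x k := match k with 0 => x | S k => par (anc x k) end.

Lemma anc_S_r x k : anc x (S k) = anc (par x) k.
Proof. induction k; simpl in *; congruence. Qed.

Lemma anc_depth x k : k <= depth x -> depth (anc x k) = depth x - k.
Proof.
  induction k; intros Hk; simpl; [lia|].
  specialize (IHk ltac:(lia)).
  assert (anc x k <> r) by (intros E'; rewrite E', depth_root in IHk; lia).
  pose proof (proj2 (par_spec _ H)). lia.
Qed.

Lemma anc_root x k : depth x <= k -> anc x k = r.
Proof.
  intros Hk. induction k as [|k IH]; [apply depth_zero; simpl; lia|].
  destruct (Nat.eq_dec (depth x) (S k)) as [e|ne].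
  - apply depth_zero. rewrite anc_depth; lia.
  - simpl. rewrite IH by lia. apply par_root.
Qed.

Lemma anc_edge x k : k < depth x -> E (anc x k) (anc x (S k)).
Proof.
  intros Hk. apply par_spec. intros E'. pose proof (anc_depth x k ltac:(lia)) as H.
  rewrite E', depth_root in H. lia.
Qed.

Lemma anc_inj x a b : a <= depth x -> b <= depth x -> anc x a = anc x b -> a = b.
Proof.
  intros Ha Hb H. pose proof (anc_depth x a Ha). pose proof (anc_depth x b Hb).
  rewrite H in *. lia.
Qed.

(* If the ancestor chains of adjacent [x], [y] first meet at [anc x i = anc y j]
   with [i + j >= 2], the two chains and the edge [xy] form a cycle. *)
Lemma meeting_cycle x y i j : E x y -> i <= depth x -> j <= depth y ->
  anc x i = anc y j -> 2 <= i + j ->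
  (forall i' j', j' <= depth y -> anc x i' = anc y j' -> i <= i') -> has_cycle E.
Proof.
  intros Hxy Hi Hj Hij Hn Hmin. set (n := i + j).
  set (g := fun k => if Nat.leb k i then anc x k else anc y (n - k)).
  assert (gle : forall k, k <= i -> g k = anc x k).
  { intros k Hk. unfold g. rewrite (proj2 (Nat.leb_le k i) Hk). reflexivity. }
  assert (ggt : forall k, i < k -> g k = anc y (n - k)).
  { intros k Hk. unfold g. destruct (Nat.leb k i) eqn:L; [apply Nat.leb_le in L; lia|reflexivity]. }
  assert (gmid : forall k, i <= k -> g k = anc y (n - k)).
  { intros k Hk. destruct (Nat.eq_dec k i) as [->|]; [|apply ggt; lia].
    rewrite gle, Hij by lia. f_equal. unfold n. lia. }
  apply (cycle_of_path E g n Hn).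
  - intros k Hk. destruct (lt_dec k i).
    + rewrite !gle by lia. apply anc_edge. lia.
    + rewrite (gmid k), (gmid (S k)) by lia. apply tadj_sym.
      replace (n - k) with (S (n - S k)) by lia. apply anc_edge. lia.
  - rewrite gmid, gle by lia. rewrite Nat.sub_diag. apply tadj_sym, Hxy.
  - (* a repetition would give an earlier meeting of the chains *)
    assert (K : forall a b, a < b -> b <= n -> g a = g b -> False).
    { intros a b Hab Hb Hg. destruct (le_lt_dec a i), (le_lt_dec b i).
      - rewrite !gle in Hg by lia. apply anc_inj in Hg; lia.
      - rewrite gle, ggt in Hg by lia.
        assert (i <= a) by (apply (Hmin a (n - b)); [lia|exact Hg]).
        replace a with i in Hg by lia. rewrite Hij in Hg.
        apply anc_inj in Hg; lia.
      - lia.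
      - rewrite !ggt in Hg by lia. apply anc_inj in Hg; lia. }
    intros a b Ha Hb Hg. destruct (lt_eq_lt_dec a b) as [[?|?]|?]; auto; exfalso; eauto.
Qed.

Lemma edge_parent x y : E x y -> par y = x \/ par x = y.
Proof.
  intros Hxy. apply NNPP. intros Hn. apply (tacyclic T).
  assert (Hxy' : x <> y) by (intros ->; exact (tadj_irrefl T _ Hxy)).
  set (P := fun i => exists j, j <= depth y /\ anc x i = anc y j).
  destruct (least_nat P) as (i & (j & Hj & Hij) & Hmin).
  { exists (depth x), (depth y). split; auto. rewrite !anc_root; auto. }
  assert (Hi : i <= depth x).
  { apply Hmin. exists (depth y). split; auto. rewrite !anc_root; auto. }
  apply (meeting_cycle x y i j Hxy Hi Hj Hij).
  - destruct i as [|[|i']], j as [|[|j']]; simpl in Hij; try lia; exfalso; auto.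

  - intros i' j' Hj' H. apply Hmin. exists j'; auto.
Qed.

Definition below x z := exists k, anc z k = x.

Lemma exit_below x z z' : E z z' -> below x z -> ~ below x z' -> z = x /\ z' = par x.
Proof.
  intros Hzz' [m Hm] Hout. destruct (edge_parent _ _ Hzz') as [Hp|Hp].
  - exfalso. apply Hout. exists (S m). rewrite anc_S_r, Hp. exact Hm.
  - destruct m as [|m]; [simpl in Hm; subst; auto|].
    exfalso. apply Hout. exists m. rewrite <- Hp, <- anc_S_r. exact Hm.
Qed.

End RootedTree.

Section Embedding.
Variables U G : graph.
Variable T : tree.
Variable B : tnode T -> vert G -> Prop.
Hypothesis HU : ~ contains_Kaleph0 U.
Hypothesis Htd : is_tree_decomposition G T B.
Hypothesis Htor : forall x, torso_in U G T B x.
Variable r : tnode T.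

Notation E := (tadj T).
Notation depth := (depth T r).
Notation par := (par T r).

Lemma home_exists v : exists n, (exists x, B x v /\ depth x = n) /\
  forall m, (exists x, B x v /\ depth x = m) -> n <= m.
Proof. apply least_nat. destruct (proj1 (proj2 Htd v)) as [x Hx]. eauto. Qed.

Definition home_node v : tnode T :=
  proj1_sig (constructive_indefinite_description _
    (proj1 (proj2_sig (constructive_indefinite_description _ (home_exists v))))).

Lemma home_node_spec v : B (home_node v) v /\ forall x, B x v -> depth (home_node v) <= depth x.
Proof.
  unfold home_node. destruct (constructive_indefinite_description _ (home_exists v)) as [n [Hn Hm]].
  simpl. destruct (constructive_indefinite_description _ _) as [x [Hx Hd]]. simpl.
  split; auto. intros y Hy. rewrite Hd. apply Hm. eauto.
Qed.

Lemma home_node_not_below x v : B x v -> x <> home_node v -> ~ below T r x (home_node v).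
Proof.
  intros Hx Hne [k Hk]. pose proof (proj2 (home_node_spec v) x Hx) as Hdx.
  destruct (le_lt_dec k (depth (home_node v))) as [Hle|Hlt].
  - destruct k as [|k]; [exact (Hne (eq_sym Hk))|].
    pose proof (anc_depth T r (home_node v) (S k) Hle). rewrite Hk in H. lia.
  - rewrite anc_root in Hk by lia. subst x. rewrite depth_root in Hdx.
    apply Hne. symmetry. apply depth_zero. lia.
Qed.

Lemma bag_par x v : B x v -> x <> home_node v -> B (par x) v.
Proof.
  intros Hx Hne.
  destruct (proj2 (proj2 Htd v) x (home_node v) Hx (proj1 (home_node_spec v))) as [l Hw].
  destruct (walk_nth _ _ _ _ _ Hw) as (HE & HB & Hlast).
  destruct (exit_index (fun k => below T r x (nth k (x :: l) x)) (length l))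
    as (k & Hk & Hin & Hout).
  - exists 0. reflexivity.
  - cbv beta. rewrite Hlast. exact (home_node_not_below x v Hx Hne).
  - destruct (exit_below T r _ _ _ (HE k Hk) Hin Hout) as [_ <-]. apply HB. lia.
Qed.

Definition torso_map x : vert G -> vert U :=
  proj1_sig (constructive_indefinite_description _ (Htor x)).

Lemma torso_map_spec x : (forall v w, B x v -> B x w -> torso_map x v = torso_map x w -> v = w) /\
  (forall v w, torso_adj G T B x v w -> adj U (torso_map x v) (torso_map x w)).
Proof. unfold torso_map. destruct (constructive_indefinite_description _ _); auto. Qed.

Lemma torso_map_shared x y v w : E x y -> B x v -> B x w -> B y v -> B y w -> v <> w ->
  adj U (torso_map x v) (torso_map x w).
Proof. intros. apply (proj2 (torso_map_spec x)). repeat split; auto. right. eauto. Qed.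

Definition adhesion x v := B x v /\ B (par x) v.

(* It is a clique of the torso, hence finite since [U] has no K_aleph0. *)
Lemma adhesion_finite x : x <> r -> exists l, forall v, In v l <-> adhesion x v.
Proof.
  intros Hx. apply (clique_finite U _ (adhesion x) (torso_map x) HU).
  - intros a b [Ha _] [Hb _]. apply (proj1 (torso_map_spec x)); auto.
  - intros a b [Ha Ha'] [Hb Hb'] Hab. apply (torso_map_shared x (par x)); auto.
    apply par_spec; auto.
Qed.

Definition adhesion_list x : list (vert G) :=
  match excluded_middle_informative (x = r) with
  | left _ => []
  | right H => proj1_sig (constructive_indefinite_description _ (adhesion_finite x H))
  end.

Lemma adhesion_list_spec x : x <> r -> forall v, In v (adhesion_list x) <-> adhesion x v.
Proof.
  intros H. unfold adhesion_list. destruct (excluded_middle_informative (x = r)); [contradiction|].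
  destruct (constructive_indefinite_description _ _); auto.
Qed.

Definition node_gluing x := map (fun a => (torso_map (par x) a, torso_map x a)) (adhesion_list x).

Lemma node_gluing_in x p : In p (node_gluing x) ->
  x <> r /\ exists a, p = (torso_map (par x) a, torso_map x a) /\ adhesion x a.
Proof.
  unfold node_gluing. intros H. apply in_map_iff in H. destruct H as [a [<- Ha]].
  destruct (classic (x = r)) as [Hr|Hr].
  - exfalso. unfold adhesion_list in Ha.
    destruct (excluded_middle_informative (x = r)); [exact Ha|contradiction].
  - split; auto. exists a. split; auto. apply adhesion_list_spec; auto.
Qed.

Lemma node_gluing_valid x : is_gluing U (node_gluing x).
Proof.
  split; [|split]; intros p q Hp Hq;
    destruct (node_gluing_in _ _ Hp) as [Hr [a [-> [Ha Ha']]]];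
    destruct (node_gluing_in _ _ Hq) as [_ [b [-> [Hb Hb']]]]; simpl.
  - split; intros E'; f_equal;
      [apply (proj1 (torso_map_spec (par x)))|apply (proj1 (torso_map_spec x))]; auto.
  - intros Hne. apply (torso_map_shared (par x) x); auto; [apply tadj_sym, par_spec; auto|].
    intros ->; auto.
  - intros Hne. apply (torso_map_shared x (par x)); auto; [apply par_spec; auto|].
    intros ->; auto.
Qed.

Definition code_G : vert G -> nat :=
  proj1_sig (constructive_indefinite_description _ (vert_countable G)).

Lemma code_G_inj a b : code_G a = code_G b -> a = b.
Proof. unfold code_G. destruct (constructive_indefinite_description _ _); auto. Qed.

(* The copy index of [x]: the code of some vertex whose home is [x], so that
   distinct homes get distinct labels. *)
Definition node_index x : nat :=
  match excluded_middle_informative (exists v, home_node v = x) with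
  | left H => code_G (proj1_sig (constructive_indefinite_description _ H))
  | right _ => 0
  end.

Lemma node_index_spec v :
  exists w, home_node w = home_node v /\ node_index (home_node v) = code_G w.
Proof.
  unfold node_index. destruct (excluded_middle_informative _) as [H|H]; [|exfalso; eauto].
  destruct (constructive_indefinite_description _ _) as [w Hw]. eauto.
Qed.

Definition node_label x : label U :=
  exist (fun g => is_gluing U (fst g)) (node_gluing x, node_index x) (node_gluing_valid x).

Fixpoint labels n x : list (label U) :=
  match n with 0 => [] | S n => node_label x :: labels n (par x) end.

Definition node_image x := labels (depth x) x.

Lemma labels_length n : forall x, length (labels n x) = n.
Proof. induction n; intros; simpl; auto. Qed.

Lemma node_image_length x : length (node_image x) = depth x.
Proof. apply labels_length. Qed.

Lemma node_image_root : node_image r = [].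
Proof. unfold node_image. rewrite depth_root. reflexivity. Qed.

Lemma node_image_par x : x <> r -> node_image x = node_label x :: node_image (par x).
Proof. intros H. unfold node_image. rewrite <- (proj2 (par_spec T r x H)). reflexivity. Qed.

Definition embed_vertex v : uvert U := vtx U (node_image (home_node v)) (torso_map (home_node v) v).

Lemma embed_vertex_at_bag v n : forall x, depth x = n -> B x v ->
  vtx U (node_image x) (torso_map x v) = embed_vertex v.
Proof.
  induction n as [|n IH]; intros x Hd Hx.
  - apply depth_zero in Hd. subst x.
    pose proof (proj2 (home_node_spec v) r Hx) as H. rewrite depth_root in H.
    assert (Hh : home_node v = r) by (apply depth_zero; lia).
    unfold embed_vertex. rewrite Hh. reflexivity.
  - destruct (classic (x = home_node v)) as [->|Hne]; [reflexivity|].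
    assert (Hr : x <> r) by (intros ->; rewrite depth_root in Hd; discriminate).
    assert (Hin : In (torso_map (par x) v, torso_map x v) (node_gluing x)).
    { apply in_map_iff. exists v. split; auto. apply adhesion_list_spec; auto.
      split; auto. apply bag_par; auto. }
    rewrite <- (IH (par x)); [|pose proof (proj2 (par_spec T r x Hr)); lia|apply bag_par; auto].
    apply uvert_eq. simpl. rewrite node_image_par by auto. simpl.
    change (glue U (node_label x)) with (node_gluing x).
    rewrite (lookup_in U _ _ _ (node_gluing_valid x) Hin). reflexivity.
Qed.

(* At its home, [v] is not glued to the parent, so it is represented there. *)
Lemma embed_vertex_repr v :
  proj1_sig (embed_vertex v) = (node_image (home_node v), torso_map (home_node v) v).
Proof.
  unfold embed_vertex. simpl. destruct (home_node_spec v) as [Hh Hm].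
  destruct (classic (home_node v = r)) as [Hr|Hr]; [rewrite Hr, node_image_root; reflexivity|].
  rewrite node_image_par by auto. simpl.
  change (glue U (node_label (home_node v))) with (node_gluing (home_node v)).
  destruct (lookup U (node_gluing (home_node v)) (torso_map (home_node v) v)) as [k|] eqn:L;
    [|reflexivity].
  exfalso. apply lookup_some in L. destruct (node_gluing_in _ _ L) as (_ & a & Ea & Ha & Ha').
  injection Ea as _ Ea. apply (proj1 (torso_map_spec (home_node v))) in Ea; auto. subst a.
  pose proof (Hm _ Ha'). pose proof (proj2 (par_spec T r _ Hr)). lia.
Qed.

(* Equal images of homes force equal homes, thanks to the copy indices. *)
Lemma node_image_home_inj v w :
  node_image (home_node v) = node_image (home_node w) -> home_node v = home_node w.
Proof.
  intros H. pose proof (f_equal (@length _) H) as Hl. rewrite !node_image_length in Hl.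
  destruct (classic (home_node v = r)) as [Hv|Hv].
  - rewrite Hv, depth_root in Hl. rewrite Hv. symmetry. apply depth_zero. lia.
  - assert (Hw : home_node w <> r)
      by (intros E'; rewrite E', depth_root in Hl; apply Hv, depth_zero, Hl).
    rewrite (node_image_par (home_node v)), (node_image_par (home_node w)) in H by auto.
    injection H as _ Hst _.
    destruct (node_index_spec v) as (a & Ha & Ca). destruct (node_index_spec w) as (b & Hb & Cb).
    rewrite Ca, Cb in Hst. apply code_G_inj in Hst. congruence.
Qed.

Lemma embed_vertex_inj v w : embed_vertex v = embed_vertex w -> v = w.
Proof.
  intros H. apply (f_equal (@proj1_sig _ _)) in H. rewrite !embed_vertex_repr in H.
  injection H as Himg HF. apply node_image_home_inj in Himg. rewrite <- Himg in HF.
  apply (proj1 (torso_map_spec (home_node v))) in HF; auto;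
    [apply home_node_spec|rewrite Himg; apply home_node_spec].
Qed.

Lemma embedding : contains (Uhat U) G.
Proof.
  exists embed_vertex. split; [exact embed_vertex_inj|].
  intros v w Hvw. destruct (proj1 Htd v w Hvw) as [x [Hv Hw]].
  exists (node_image x), (torso_map x v), (torso_map x w).
  split; [apply (embed_vertex_at_bag v (depth x)); auto|].
  split; [apply (embed_vertex_at_bag w (depth x)); auto|].
  apply (proj2 (torso_map_spec x)). repeat split; auto.
  intros ->. exact (adj_irrefl G _ Hvw).
Qed.

End Embedding.

(* Every graph of D(U) embeds in [Uhat]; a decomposition over an empty tree
   only decomposes the empty graph. *)
Lemma Uhat_contains (U G : graph) : ~ contains_Kaleph0 U -> inD U G -> contains (Uhat U) G.
Proof.
  intros HU (T & B & Htd & Htor).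
  destruct (classic (exists r : tnode T, True)) as [[r _]|Hno].
  - exact (embedding U G T B HU Htd Htor r).
  - assert (Hempty : vert G -> False).
    { intros v. destruct (proj1 (proj2 Htd v)) as [x _]. apply Hno. exists x. exact I. }
    exists (fun v => False_rect _ (Hempty v)). split; intros v; exfalso; exact (Hempty v).
Qed.

Theorem mainTheorem14 :
  forall U : graph, ~ contains_Kaleph0 U ->
    exists Uhat : graph, inD U Uhat /\ (forall G : graph, inD U G -> contains Uhat G).
Proof.
  intros U HU. exists (Uhat U). split.
  - exact (Uhat_inD U).
  - intros G HG. exact (Uhat_contains U G HU HG).
Qed.
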